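(* Let $\mathcal{X}$ be a compact 2-dimensional Riemannian manifold embedded in $\mathbb{R}^3$, let $\{\phi_k\}_{k\in\mathbb{N}}$ be an orthonormal basis of $L^2(\mathcal{X})$ consisting of Laplace–Beltrami eigenfunctions ($\Delta\phi_k=\lambda_k\phi_k$, ordered by eigenvalue), and let $X\in L^2(\mathcal{X},\mathbb{R}^3)$ be the coordinate function of $\mathcal{X}$. For $\sigma>0$ and $K>0$ define the shell operator $$\mathcal{S}_K(X):=\sum_{k=1}^{\infty}\frac{1}{1+\exp\bigl(\sigma(k-K)\bigr)}\,\langle \phi_k, X\rangle_{L^2}\,\phi_k,$$ where $\langle\phi_k,X\rangle_{L^2}\in\mathbb{R}^3$ is taken componentwise. Then, whenever $\mathcal{S}_{K+1}(X)\neq 0$, $$\frac{\bigl\|\mathcal{S}_{K+1}(X)-\mathcal{S}_{K}(X)\bigr\|_{L^2}}{\bigl\|\mathcal{S}_{K+1}(X)\bigr\|_{L^2}}\leq|1-e^{-\sigma}|,$$ and $|1-e^{-\sigma}|=\mathcal{O}(\sigma)$ as $\sigma\to 0$.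
   Context: The $L^2$ norm of an $\mathbb{R}^3$-valued function is $\|f\|_{L^2}^2=\int_{\mathcal{X}}|f|^2$, with $|\cdot|$ the Euclidean norm. The parameter $\sigma$ is called the upsampling variance; $\mathcal{S}_K(X)$ is a smoothed version of the coordinate function obtained by sigmoid-weighted projection onto the Laplace–Beltrami eigenfunctions. *)

From HB Require Import structures.
From mathcomp Require Import all_boot all_order all_algebra.
From mathcomp Require Import all_classical all_reals all_analysis.
Set Implicit Arguments. Unset Strict Implicit. Unset Printing Implicit Defensive.
Import Order.TTheory GRing.Theory Num.Theory.
Import numFieldNormedType.Exports.
Local Open Scope classical_set_scope.
Local Open Scope ring_scope.

Section Defs.
Context (R : realType) (d : measure_display) (T : measurableType d)
  (mu : {measure set T -> \bar R}).

Definition sq_int (f : T -> R) : \bar R := (\int[mu]_x ((f x) ^+ 2)%:E)%E.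

Definition L2 (f : T -> R) : Prop :=
  measurable_fun setT f /\ (sq_int f < +oo)%E.

Definition inner (f g : T -> R) : R := fine (\int[mu]_x (f x * g x)%:E)%E.

Definition orthonormal_basis (phi : nat -> T -> R) : Prop :=
  (forall k, L2 (phi k)) /\
  (forall j k, inner (phi j) (phi k) = (j == k)%:R) /\
  (forall f, L2 f -> (forall k, inner f (phi k) = 0) -> sq_int f = 0%E).

Definition L2vec (f : 'I_3 -> T -> R) : Prop := forall i, L2 (f i).

Definition l2sq (f : 'I_3 -> T -> R) : \bar R :=
  (\int[mu]_x (\sum_(i < 3) (f i x) ^+ 2)%:E)%E.

Definition L2norm (f : 'I_3 -> T -> R) : R := Num.sqrt (fine (l2sq f)).

(* sigmoid weight of the k-th basis element; phi k stands for phi_{k+1}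
   of the paper, so the paper's index is k.+1 *)
Definition shell_weight (sigma K : R) (k : nat) : R :=
  (1 + expR (sigma * (k.+1%:R - K)))^-1.

Definition shell_partial (phi : nat -> T -> R) (X : 'I_3 -> T -> R)
  (sigma K : R) (N : nat) : 'I_3 -> T -> R :=
  fun i x => \sum_(k < N) shell_weight sigma K k * inner (phi k) (X i) * phi k x.

(* g is (a representative of) S_K(X): the L^2 limit of the partial sums *)
Definition is_shell (phi : nat -> T -> R) (X : 'I_3 -> T -> R)
  (sigma K : R) (g : 'I_3 -> T -> R) : Prop :=
  L2vec g /\
  (fun N : nat => L2norm (fun i x => g i x - shell_partial phi X sigma K N i x))
    @ \oo --> (0 : R).

End Defs.

(* Shifting K by one multiplies the exponential in the sigmoid weight by e^sigma,
   so the weights satisfy 0 <= w_{K+1} k - w_K k <= (1 - e^-sigma) w_{K+1} k.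
   By orthonormality this coefficientwise bound holds in L^2 between the partial
   sums of S_{K+1}(X) - S_K(X) and of S_{K+1}(X); as both shell operators are
   L^2 limits of their partial sums, the triangle inequality (Cauchy-Schwarz
   for the R^3-valued L^2 product) carries the bound to the limit.
   Finally 0 <= 1 - e^-s <= s. *)

From HB Require Import structures.
From mathcomp Require Import all_boot all_order all_algebra.
From mathcomp Require Import all_classical all_reals all_analysis.
From mathcomp Require Import ring lra.
Import Order.TTheory GRing.Theory Num.Theory.
Import numFieldNormedType.Exports.
Local Open Scope ring_scope.

Set Implicit Arguments.
Unset Strict Implicit.

Lemma ler_addr_cvg0 (R : realFieldType) (x y : R) (u : nat -> R) :
  (u @ \oo --> 0)%classic -> (forall n, x <= y + u n) -> x <= y.
Proof.
move=> u0 xyu.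
have yu_y : ((fun n => y + u n) @ \oo --> y)%classic.
  by rewrite -[y in (_ --> y)%classic]addr0; apply: cvgD => //; exact: cvg_cst.
by apply: (cvgr_to_ge yu_y); exact: nearW.
Qed.

Lemma discriminant_le (R : realFieldType) (A B C : R) : 0 <= C ->
  (forall t, 0 <= A + 2 * t * B + t ^+ 2 * C) -> B ^+ 2 <= A * C.
Proof.
move=> C_ge0 quad_ge0.
have A_ge0 : 0 <= A by have := quad_ge0 0; rewrite !(mul0r, mulr0, expr0n, addr0).
have [C0|C_neq0] := eqVneq C 0.
  rewrite C0 mulr0; have [->|B_neq0] := eqVneq B 0; first by rewrite expr0n.
  have := quad_ge0 (- (A + 1) / (2 * B)).
  rewrite C0 mulr0 addr0 (_ : 2 * _ * B = - (A + 1)); last by field.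
  lra.
have C_gt0 : 0 < C by rewrite lt_def C_neq0.
have := quad_ge0 (- B / C).
rewrite (_ : A + _ + _ = (A * C - B ^+ 2) / C); last by field.
rewrite pmulr_lge0 ?invr_gt0 //; lra.
Qed.

Lemma inv1D_sub_bounds (R : realFieldType) (a u : R) : 0 <= a -> 1 <= u ->
  0 <= (1 + a)^-1 - (1 + a * u)^-1 <= (1 - u^-1) * (1 + a)^-1.
Proof.
move=> a_ge0 u_ge1.
have [a1_neq0 au1_neq0 u_neq0] : [/\ 1 + a != 0, 1 + a * u != 0 & u != 0].
  by split; rewrite gt_eqF //; nra.
rewrite (_ : _ - _ = a * (u - 1) / ((1 + a) * (1 + a * u))); last first.
  by field; rewrite a1_neq0 au1_neq0.
apply/andP; split; first by rewrite divr_ge0 ?mulr_ge0 //; nra.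
rewrite -subr_ge0 (_ : _ - _ = (u - 1) / (u * (1 + a) * (1 + a * u))); last first.
  by field; rewrite a1_neq0 au1_neq0 u_neq0.
by rewrite divr_ge0 ?mulr_ge0 //; nra.
Qed.

Lemma one_sub_expRN_ge0 (R : realType) (s : R) : 0 <= s -> 0 <= 1 - expR (- s).
Proof. by move=> s_ge0; rewrite subr_ge0 expR_le1 oppr_le0. Qed.

Lemma one_sub_expRN_le (R : realType) (s : R) : 0 <= s -> `|1 - expR (- s)| <= s.
Proof.
move=> s_ge0; rewrite ger0_norm ?one_sub_expRN_ge0 //.
by have := expR_ge1Dx (- s); lra.
Qed.

Lemma shell_weight_step (R : realType) (sigma K : R) (k : nat) : 0 <= sigma ->
  0 <= shell_weight sigma (K + 1) k - shell_weight sigma K k <=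
       (1 - expR (- sigma)) * shell_weight sigma (K + 1) k.
Proof.
move=> sigma_ge0; rewrite /shell_weight expRN.
have -> : expR (sigma * (k.+1%:R - K)) =
          expR (sigma * (k.+1%:R - (K + 1))) * expR sigma.
  by rewrite -expRD; congr expR; ring.
apply: inv1D_sub_bounds; first exact: expR_ge0.
by have := expR_ge1Dx sigma; lra.
Qed.

Section L2_inner.
Context (R : realType) (d : measure_display) (T : measurableType d)
  (mu : {measure set T -> \bar R}).
Implicit Types (f g h : T -> R) (a : R).

Lemma Rintegral_sum (D : set T) (I : Type) (s : seq I) (P : pred I)
    (F : I -> T -> R) :
  measurable D -> (forall i, mu.-integrable D (EFin \o F i)) ->
  \int[mu]_(x in D) (\sum_(i <- s | P i) F i x) =
  \sum_(i <- s | P i) \int[mu]_(x in D) F i x.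
Proof.
move=> mD intF; rewrite /Rintegral.
under eq_integral do rewrite -sumEFin.
by rewrite integral_sum // -sum_fine // => i _; exact: integrable_fin_num (intF i).
Qed.

Lemma L2P f : L2 mu f <-> f \in Lfun mu 2%:E.
Proof.
split=> [[mf fin]|f2].
  rewrite inE; apply/andP; split; rewrite inE //=.
  rewrite /finite_norm unlock /Lnorm poweR_lty //.
  under eq_integral => x _ do rewrite /comp abse_EFin poweR_EFin
    (powR_mulrn 2 (normr_ge0 (f x))) (real_normK (num_real (f x))).
  exact: fin.
have /integrableP[_ fin] := Lfun2_integrable_sqr f2.
split; first exact: set_mem (sub_Lfun_mfun f2).
by move: fin; under eq_integral => x _ do
  rewrite /comp abse_EFin (ger0_norm (sqr_ge0 _)).
Qed.

Lemma L2D f g : L2 mu f -> L2 mu g -> L2 mu (fun x => f x + g x).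
Proof.
by move=> /L2P f2 /L2P g2; apply/L2P; exact: (Lfun_addr_closed mu (lee1n 2)).2.
Qed.

Lemma L2Z a f : L2 mu f -> L2 mu (fun x => a * f x).
Proof.
move=> /L2P f2; apply/L2P; under eq_fun do rewrite mulrC.
exact: Lfun_scale (ler1n R 2) f2.
Qed.

Lemma L2_sum (I : Type) (s : seq I) (P : pred I) (F : I -> T -> R) :
  (forall i, L2 mu (F i)) -> L2 mu (fun x => \sum_(i <- s | P i) F i x).
Proof.
move=> F_L2; elim: s => [|i s IH].
  under eq_fun do rewrite big_nil.
  by apply/L2P; exact: (Lfun_addr_closed mu (lee1n 2)).1.
under eq_fun do rewrite big_cons.
by case: (P i) => //; exact: L2D.
Qed.

Lemma L2_integrable_mul f g : L2 mu f -> L2 mu g ->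
  mu.-integrable setT (EFin \o (fun x => f x * g x)).
Proof. by move=> /L2P f2 /L2P g2; apply/Lfun1_integrable/Lfun2_mul_Lfun1. Qed.

Lemma innerC f g : inner mu f g = inner mu g f.
Proof. by rewrite /inner; under eq_integral do rewrite mulrC. Qed.

Lemma inner_ge0 f : 0 <= inner mu f f.
Proof. by apply: Rintegral_ge0 => // x _; rewrite -expr2 sqr_ge0. Qed.

Lemma innerDl f g h : L2 mu f -> L2 mu g -> L2 mu h ->
  inner mu (fun x => f x + g x) h = inner mu f h + inner mu g h.
Proof.
move=> f_L2 g_L2 h_L2; rewrite /inner -/(Rintegral _ _ _).
under eq_Rintegral do rewrite mulrDl.
by rewrite RintegralD //; exact: L2_integrable_mul.
Qed.

Lemma innerZl a f g : L2 mu f -> L2 mu g ->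
  inner mu (fun x => a * f x) g = a * inner mu f g.
Proof.
move=> f_L2 g_L2; rewrite /inner -!/(Rintegral _ _ _).
under eq_Rintegral do rewrite -mulrA.
by rewrite RintegralZl //; exact: L2_integrable_mul.
Qed.

Lemma innerDr f g h : L2 mu f -> L2 mu g -> L2 mu h ->
  inner mu h (fun x => f x + g x) = inner mu h f + inner mu h g.
Proof. by move=> *; rewrite innerC innerDl // ![inner mu _ h]innerC. Qed.

Lemma innerZr a f g : L2 mu f -> L2 mu g ->
  inner mu g (fun x => a * f x) = a * inner mu g f.
Proof. by move=> *; rewrite innerC innerZl // innerC. Qed.

Lemma inner_suml (I : Type) (s : seq I) (P : pred I) (c : I -> R)
    (F : I -> T -> R) g :
  (forall i, L2 mu (F i)) -> L2 mu g ->
  inner mu (fun x => \sum_(i <- s | P i) c i * F i x) g =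
  \sum_(i <- s | P i) c i * inner mu (F i) g.
Proof.
move=> F_L2 g_L2; rewrite /inner -/(Rintegral _ _ _).
under eq_Rintegral do rewrite mulr_suml.
rewrite Rintegral_sum // => [|i]; last by apply: L2_integrable_mul => //; exact: L2Z.
by apply: eq_bigr => i _; exact: innerZl.
Qed.

End L2_inner.

Section L2_vectors.
Context (R : realType) (d : measure_display) (T : measurableType d)
  (mu : {measure set T -> \bar R}).
Implicit Types (F G H : 'I_3 -> T -> R) (t : R).

Definition vinner F G := \sum_(i < 3) inner mu (F i) (G i).

Lemma vinner_ge0 F : 0 <= vinner F F.
Proof. by apply: sumr_ge0 => i _; exact: inner_ge0. Qed.

Lemma L2normE F : L2vec mu F -> L2norm mu F = Num.sqrt (vinner F F).
Proof.
move=> F_L2; rewrite /L2norm /l2sq -/(Rintegral _ _ _) Rintegral_sum // => i.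
by apply: Lfun2_integrable_sqr; apply/L2P.
Qed.

Lemma L2vecB F G : L2vec mu F -> L2vec mu G -> L2vec mu (fun i x => F i x - G i x).
Proof.
move=> F_L2 G_L2 i; under eq_fun do rewrite -mulN1r.
by apply: L2D => //; exact: L2Z.
Qed.

Lemma vinner_expand F G t : L2vec mu F -> L2vec mu G ->
  vinner (fun i x => F i x + t * G i x) (fun i x => F i x + t * G i x) =
  vinner F F + 2 * t * vinner F G + t ^+ 2 * vinner G G.
Proof.
move=> F_L2 G_L2; rewrite /vinner !mulr_sumr -!big_split /=.
apply: eq_bigr => i _; have tG_L2 : L2 mu (fun x => t * G i x) by exact: L2Z.
rewrite innerDl ?innerDr ?innerZl ?innerZr //; last exact: L2D.
by rewrite (innerC mu (G i)); ring.
Qed.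

Lemma vinner_CauchySchwarz F G : L2vec mu F -> L2vec mu G ->
  vinner F G ^+ 2 <= vinner F F * vinner G G.
Proof.
move=> F_L2 G_L2; apply: discriminant_le => [|t]; first exact: vinner_ge0.
by rewrite -vinner_expand //; exact: vinner_ge0.
Qed.

Lemma L2norm_addZ_le F G t : L2vec mu F -> L2vec mu G ->
  L2norm mu (fun i x => F i x + t * G i x) <= L2norm mu F + `|t| * L2norm mu G.
Proof.
move=> F_L2 G_L2.
have FtG_L2 : L2vec mu (fun i x => F i x + t * G i x).
  by move=> i; apply: L2D => //; exact: L2Z.
rewrite !L2normE // vinner_expand //.
set A := vinner F F; set B := vinner F G; set C := vinner G G.
have A_ge0 : 0 <= A by exact: vinner_ge0.
have C_ge0 : 0 <= C by exact: vinner_ge0.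
have B_le : t * B <= `|t| * (Num.sqrt A * Num.sqrt C).
  rewrite (le_trans (real_ler_norm (num_real _))) // normrM ler_wpM2l //.
  rewrite -sqrtrM // -sqrtr_sqr ler_sqrt ?mulr_ge0 //.
  exact: vinner_CauchySchwarz.
rewrite -[X in _ <= X]ger0_norm ?addr_ge0 ?mulr_ge0 ?sqrtr_ge0 //.
rewrite -sqrtr_sqr ler_sqrt ?sqr_ge0 // sqrrD exprMn !sqr_sqrtr //.
rewrite real_normK ?num_real //; lra.
Qed.

Lemma L2norm_subC F G :
  L2norm mu (fun i x => F i x - G i x) = L2norm mu (fun i x => G i x - F i x).
Proof.
rewrite /L2norm /l2sq; do 3 f_equal; apply/funext => x.
by congr EFin; apply: eq_bigr => i _; rewrite -sqrrN opprB.
Qed.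

Lemma L2norm_sub_le F G H : L2vec mu F -> L2vec mu G -> L2vec mu H ->
  L2norm mu (fun i x => F i x - H i x) <=
  L2norm mu (fun i x => F i x - G i x) + L2norm mu (fun i x => G i x - H i x).
Proof.
move=> F_L2 G_L2 H_L2.
have -> : (fun i x => F i x - H i x) =
    (fun i x => (F i x - G i x) + 1 * (G i x - H i x)).
  by apply/funext => i; apply/funext => x; ring.
apply: le_trans (L2norm_addZ_le 1 (L2vecB F_L2 G_L2) (L2vecB G_L2 H_L2)) _.
by rewrite normr1 mul1r.
Qed.

Lemma L2norm_le_sub F G : L2vec mu F -> L2vec mu G ->
  L2norm mu G <= L2norm mu F + L2norm mu (fun i x => F i x - G i x).
Proof.
move=> F_L2 G_L2.
rewrite {1}(_ : G = (fun i x => F i x + -1 * (F i x - G i x))); last first.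
  by apply/funext => i; apply/funext => x; ring.
apply: le_trans (L2norm_addZ_le (-1) F_L2 (L2vecB F_L2 G_L2)) _.
by rewrite normrN1 mul1r.
Qed.

End L2_vectors.

Section orthonormal_sums.
Context (R : realType) (d : measure_display) (T : measurableType d)
  (mu : {measure set T -> \bar R}) (phi : nat -> T -> R).
Hypothesis phi_L2 : forall k, L2 mu (phi k).
Hypothesis phi_orth : forall j k, inner mu (phi j) (phi k) = (j == k)%:R.

Definition phi_sum (n : nat) (a : nat -> 'I_3 -> R) : 'I_3 -> T -> R :=
  fun i x => \sum_(k < n) a k i * phi k x.

Lemma phi_sumB n a b :
  (fun i x => phi_sum n a i x - phi_sum n b i x) =
  phi_sum n (fun k i => a k i - b k i).
Proof.
apply/funext => i; apply/funext => x; rewrite /phi_sum -sumrB.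
by apply: eq_bigr => k _; rewrite mulrBl.
Qed.

Lemma L2vec_phi_sum n a : L2vec mu (phi_sum n a).
Proof. by move=> i; apply: L2_sum => k; exact: L2Z. Qed.

Lemma inner_phi_sum n (b c : nat -> R) :
  inner mu (fun x => \sum_(k < n) b k * phi k x)
           (fun x => \sum_(k < n) c k * phi k x) = \sum_(k < n) b k * c k.
Proof.
rewrite inner_suml //; last by apply: L2_sum => k; exact: L2Z.
apply: eq_bigr => k _; congr (_ * _).
rewrite innerC inner_suml // (bigD1 k) //= phi_orth eqxx mulr1 big1 ?addr0 //.
by move=> j /negbTE jk; rewrite phi_orth val_eqE jk mulr0.
Qed.

Lemma L2norm_phi_sum n a :
  L2norm mu (phi_sum n a) = Num.sqrt (\sum_(i < 3) \sum_(k < n) a k i ^+ 2).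
Proof.
rewrite L2normE; last exact: L2vec_phi_sum.
by congr Num.sqrt; apply: eq_bigr => i _; exact: inner_phi_sum (a^~ i) (a^~ i).
Qed.

Lemma L2norm_phi_sum_le n a b q : 0 <= q ->
  (forall k i, `|b k i| <= q * `|a k i|) ->
  L2norm mu (phi_sum n b) <= q * L2norm mu (phi_sum n a).
Proof.
move=> q_ge0 ba; have -> : q = Num.sqrt (q ^+ 2) by rewrite sqrtr_sqr ger0_norm.
rewrite !L2norm_phi_sum -sqrtrM ?sqr_ge0 // ler_sqrt; last first.
  by apply: mulr_ge0; [exact: sqr_ge0 | do 2 (apply: sumr_ge0 => ? _); exact: sqr_ge0].
rewrite mulr_sumr; apply: ler_sum => i _.
rewrite mulr_sumr; apply: ler_sum => k _.
rewrite -(real_normK (num_real (b k i))) -(real_normK (num_real (a k i))).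
by have := ba k i; have := normr_ge0 (b k i); nra.
Qed.

Lemma shell_partialE X sigma K N :
  shell_partial mu phi X sigma K N =
  phi_sum N (fun k i => shell_weight sigma K k * inner mu (phi k) (X i)).
Proof. by []. Qed.

Lemma shell_partial_step X sigma K N : 0 <= sigma ->
  L2norm mu (fun i x => shell_partial mu phi X sigma (K + 1) N i x -
                        shell_partial mu phi X sigma K N i x) <=
  (1 - expR (- sigma)) * L2norm mu (shell_partial mu phi X sigma (K + 1) N).
Proof.
move=> sigma_ge0; rewrite !shell_partialE phi_sumB.
apply: L2norm_phi_sum_le (one_sub_expRN_ge0 sigma_ge0) _ => k i.
have /andP[w_ge0 w_le] := shell_weight_step K k sigma_ge0.
rewrite -mulrBl !normrM mulrA ler_wpM2r // ger0_norm // (le_trans w_le) //.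
by rewrite ler_wpM2l ?one_sub_expRN_ge0 ?real_ler_norm ?num_real.
Qed.

Lemma shell_sub_le X sigma K S1 S0 : 0 <= sigma ->
  is_shell mu phi X sigma (K + 1) S1 -> is_shell mu phi X sigma K S0 ->
  L2norm mu (fun i x => S1 i x - S0 i x) <= (1 - expR (- sigma)) * L2norm mu S1.
Proof.
move=> sigma_ge0 [S1_L2 S1_lim] [S0_L2 S0_lim].
set q := 1 - expR (- sigma); have q_ge0 : 0 <= q := one_sub_expRN_ge0 sigma_ge0.
set P1 := shell_partial mu phi X sigma (K + 1).
set P0 := shell_partial mu phi X sigma K.
set e1 := fun N => L2norm mu (fun i x => S1 i x - P1 N i x).
set e0 := fun N => L2norm mu (fun i x => S0 i x - P0 N i x).
apply: (@ler_addr_cvg0 _ _ _ (fun N => (1 + q) * e1 N + e0 N)).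
  rewrite -[X in (_ --> X)%classic](addr0 0).
  rewrite -[X in (_ --> X + _)%classic](mulr0 (1 + q)).
  by apply: cvgD; [apply: cvgM; [exact: cvg_cst | exact: S1_lim] | exact: S0_lim].
move=> N.
have P1_L2 : L2vec mu (P1 N) by rewrite /P1 shell_partialE; exact: L2vec_phi_sum.
have P0_L2 : L2vec mu (P0 N) by rewrite /P0 shell_partialE; exact: L2vec_phi_sum.
have P_step : L2norm mu (fun i x => P1 N i x - P0 N i x) <= q * L2norm mu (P1 N).
  exact: shell_partial_step.
have := L2norm_sub_le S1_L2 P1_L2 S0_L2.
have := L2norm_sub_le P1_L2 P0_L2 S0_L2.
have := ler_wpM2l q_ge0 (L2norm_le_sub S1_L2 P1_L2).
rewrite /e1 /e0 (L2norm_subC mu (P0 N)); move: P_step q_ge0; clearbody q P1 P0.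
(* Abstracting the norms keeps lra from unfolding them. *)
by repeat move: (L2norm _ _) => ?; lra.
Qed.

End orthonormal_sums.

Theorem theorem1 (R : realType) (d : measure_display) (T : measurableType d)
  (mu : {measure set T -> \bar R}) (phi : nat -> T -> R) (X : 'I_3 -> T -> R)
  (sigma K : R) (S1 S0 : 'I_3 -> T -> R) :
  orthonormal_basis mu phi -> L2vec mu X -> 0 < sigma -> 0 < K ->
  is_shell mu phi X sigma (K + 1) S1 -> is_shell mu phi X sigma K S0 ->
  L2norm mu S1 != 0 ->
  L2norm mu (fun i x => S1 i x - S0 i x) / L2norm mu S1 <= `|1 - expR (- sigma)|
  /\ (exists C : R, exists delta : R, 0 < delta /\
        forall s : R, 0 < s < delta -> `|1 - expR (- s)| <= C * s).
Proof.
move=> [phi_L2 [phi_orth _]] _ sigma_gt0 _ S1_shell S0_shell S1_neq0.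
split; last first.
  exists 1, 1; split => // s /andP[s_gt0 _].
  by rewrite mul1r one_sub_expRN_le // ltW.
have S1_gt0 : 0 < L2norm mu S1 by rewrite lt_def S1_neq0 sqrtr_ge0.
rewrite ger0_norm ?(one_sub_expRN_ge0 (ltW sigma_gt0)) // ler_pdivrMr //.
exact (shell_sub_le phi_L2 phi_orth (ltW sigma_gt0) S1_shell S0_shell).
Qed.
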